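(* Let $n>1$ and consider the undirected cycle $C_{2n}$ with vertices $v_1,\dots,v_n,w_1,\dots,w_n$, where $v_i$ is adjacent to $w_i$ and $w_{i-1}$ (indices of $w$ modulo $n$, so $v_1$ is adjacent to $w_1$ and $w_n$). Let $x_i,y_i\in[3]$ denote the hat colours of $v_i,w_i$, all arithmetic modulo $3$. Define guessing functions $f_i$ for $v_i$ and $g_i$ for $w_i$ by: for $i\ne1$, $f_i(y_{i-1},y_i)=y_i-1$ if $y_i\ne y_{i-1}+1$ and $f_i=y_i+1$ if $y_i=y_{i-1}+1$; $f_1(y_n,y_1)=y_1-1$ if $y_1\ne y_n-1$ and $f_1=y_1+1$ if $y_1=y_n-1$; for $i\ne n$, $g_i(x_i,x_{i+1})=x_i$ if $x_i\ne x_{i+1}+1$ and $g_i=x_i-1$ if $x_i=x_{i+1}+1$; $g_n(x_n,x_1)=x_n$ if $x_n\ne x_1$ and $g_n=x_n-1$ if $x_n=x_1$. Call a configuration $(x,y)\in[3]^n\times[3]^n$ bad if $f_i\ne x_i$ and $g_i\ne y_i$ for all $i$. Then: (a) if $n\equiv 0\pmod 3$ there is no bad configuration; in particular $C_{2n}$ is $3$-solvable; (b) if $n\equiv1\pmod3$ the bad configurations are exactly those with $x_i=y_i=a-(i-1)$ for all $i=1,\dots,n$, for some $a\in[3]$; (c) if $n\equiv2\pmod3$ the bad configurations are exactly those with $y_i=a+(i-1)$ and $x_i=a+(i-2)$ for all $i=1,\dots,n$, for some $a\in[3]$.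
   Context: An undirected graph is identified with the directed graph having both arcs for each edge; $N^-(v)$ is the set of neighbours of $v$. For $q\ge2$ let $[q]=\{0,\dots,q-1\}$. A $D$-function over $[q]$ is a map $f=(f_v)_{v\in V}:[q]^V\to[q]^V$ with each $f_v(x)$ depending only on $(x_u)_{u\in N^-(v)}$. $D$ is $q$-solvable if some $D$-function $f$ over $[q]$ has the property that for every $x\in[q]^V$ there is $v$ with $f_v(x)=x_v$. *)

From HB Require Import structures.
From mathcomp Require Import all_boot all_order all_algebra.
Set Implicit Arguments. Unset Strict Implicit. Unset Printing Implicit Defensive.
Import GRing.Theory.

(* A (di)graph on a finite vertex set V is a relation D : rel V, where
   D u v means there is an arc u -> v; N^-(v) = [pred u | D u v].
   The colour set [q] = {0,...,q-1} is 'I_q. *)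

Definition depends_only_on_inneighbours (V : finType) (D : rel V) (q : nat)
  (F : (V -> 'I_q) -> 'I_q) (v : V) : Prop :=
  forall x x' : V -> 'I_q, (forall u, D u v -> x u = x' u) -> F x = F x'.

Definition D_function (V : finType) (D : rel V) (q : nat)
  (f : (V -> 'I_q) -> V -> 'I_q) : Prop :=
  forall v, depends_only_on_inneighbours D (fun x => f x v) v.

Definition q_solvable (V : finType) (D : rel V) (q : nat) : Prop :=
  exists f : (V -> 'I_q) -> V -> 'I_q,
    D_function D f /\ forall x : V -> 'I_q, exists v, f x v = x v.

(* Vertices: inl i = v_{i+1}, inr j = w_{j+1} (0-based indices).
   v_i ~ w_i and v_i ~ w_{i-1} (w-indices mod n). Undirected: both arcs. *)
Definition cycle_vw_adj (n : nat) (i j : 'I_n) : bool :=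
  (val j == val i) || ((val j).+1 %% n == val i).

Definition cycle_adj (n : nat) : rel ('I_n + 'I_n) :=
  fun a b => match a, b with
             | inl i, inr j => cycle_vw_adj i j
             | inr j, inl i => cycle_vw_adj i j
             | _, _ => false
             end.

Local Open Scope ring_scope.

(* guess of v_{i+1}, from y_i (= paper's y_{i-1}, cyclically) and y_{i+1} *)
Definition fguess (n : nat) (y : 'I_n -> 'Z_3) (i : 'I_n) : 'Z_3 :=
  let yp := y (ord_pred i) in
  if val i == 0%N then (if y i != yp - 1 then y i - 1 else y i + 1)
  else (if y i != yp + 1 then y i - 1 else y i + 1).

(* guess of w_{i+1}, from x_{i+1} and x_{i+2} (cyclically) *)
Definition gguess (n : nat) (x : 'I_n -> 'Z_3) (i : 'I_n) : 'Z_3 :=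
  let xs := x (ordS i) in
  if val i == n.-1 then (if x i != xs then x i else x i - 1)
  else (if x i != xs + 1 then x i else x i - 1).

Definition bad_config (n : nat) (x y : 'I_n -> 'Z_3) : Prop :=
  forall i : 'I_n, fguess y i != x i /\ gguess x i != y i.

Arguments cycle_adj n : clear implicits.
Arguments q_solvable [V] D q.

From HB Require Import structures.
From mathcomp Require Import all_boot all_order all_algebra.
From Stdlib Require Import Lia.
From mathcomp Require Import zify.
Import GRing.Theory.
Local Open Scope ring_scope.

(* Number the vertices v_1 w_1 v_2 w_2 ... v_n w_n around the cycle.  For a
   configuration (x, y) the guesses of w_k and v_{k+1} depend only on the
   colours of the "link" (x_k, y_k) -> (x_{k+1}, y_{k+1}); the configuration is
   bad iff every one of the n links is bad.  There are n - 1 inner links and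
   one wrap-around link (w_n, v_1), which uses the modified rules.

   A finite check over 'Z_3 shows that along any bad link the difference
   d_k = y_k - x_k never increases for a suitable ranking of 'Z_3, and if it
   stays the same then x advances by a fixed step depending on d.  Around the
   cycle the rank must therefore be constant, so d_k = c and x_k = x_1 + k s(c)
   for a constant c; the wrap link then imposes (n - 1) s(c) + s'(c) = 0, which
   forces c <> 2 and n = c + 1 in 'Z_3.  Conversely every such progression is
   bad (bad_configP).  The three residues of n mod 3 give the three parts of
   the theorem, and the absence of bad configurations for 3 | n gives
   3-solvability since the strategy is a D-function of the cycle. *)

(* The guessing rules: g_inner/f_inner are used by w_k (k <> n) and v_{k+1}
   (k+1 <> 1); g_wrap/f_wrap by w_n and v_1.  Arguments follow the link. *)
Definition g_inner (x x' : 'Z_3) : 'Z_3 := if x != x' + 1 then x else x - 1.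
Definition f_inner (yp y : 'Z_3) : 'Z_3 := if y != yp + 1 then y - 1 else y + 1.
Definition g_wrap (x x' : 'Z_3) : 'Z_3 := if x != x' then x else x - 1.
Definition f_wrap (yp y : 'Z_3) : 'Z_3 := if y != yp - 1 then y - 1 else y + 1.

Definition inner_link (x y x' y' : 'Z_3) : bool :=
  (g_inner x x' != y) && (f_inner y y' != x').
Definition wrap_link (x y x' y' : 'Z_3) : bool :=
  (g_wrap x x' != y) && (f_wrap y y' != x').

(* The ranking of the difference y - x that decreases along bad links, and
   the steps of x along bad links (inner, resp. wrap-around) that keep the
   difference constant. *)
Definition drank (d : 'Z_3) : nat := if d == 0 then 0 else if d == 1 then 2 else 1.
Definition step (d : 'Z_3) : 'Z_3 := if d == 0 then -1 else if d == 1 then 1 else 0.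
Definition wrap_step (d : 'Z_3) : 'Z_3 := if d == 0 then 0 else if d == 1 then -1 else 1.

Ltac case_Z3 c := case: c => [[|[|[|?]]] ?].

Lemma inner_link_table {x y x' y' : 'Z_3} : inner_link x y x' y' ->
  leq (drank (y' - x')) (drank (y - x)) && ((y' - x' == y - x) ==> (x' == x + step (y - x))).
Proof. by case_Z3 x; case_Z3 y; case_Z3 x'; case_Z3 y'. Qed.

Lemma wrap_link_table {x y x' y' : 'Z_3} : wrap_link x y x' y' ->
  leq (drank (y' - x')) (drank (y - x)) && ((y' - x' == y - x) ==> (x' == x + wrap_step (y - x))).
Proof. by case_Z3 x; case_Z3 y; case_Z3 x'; case_Z3 y'. Qed.

Lemma drank_inj : injective drank.
Proof. by move=> a b h; apply/eqP; move: h; case_Z3 a; case_Z3 b. Qed.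

(* The closing equation (l steps followed by a wrap step return x to its
   start) has solutions only for c <> 2, and then l + 1 = c + 1 in 'Z_3. *)
Lemma closure_solution {c : 'Z_3} {l : nat} :
  step c *+ l + wrap_step c = 0 -> c != 2 /\ l.+1%:R = c + 1.
Proof.
rewrite -(mulr_natl (step c)) -[l.+1%:R]natr1; move: (l%:R : 'Z_3) => r.
have : (r * step c + wrap_step c == 0) ==> (c != 2) && (r + 1 == c + 1).
  by case_Z3 c; case_Z3 r.
move=> /implyP solve /eqP zero.
by case/andP: (solve zero) => c_not_2 /eqP.
Qed.

Lemma inner_link_progression (c u : 'Z_3) : c != 2 ->
  inner_link u (u + c) (u + step c) (u + step c + c).
Proof. by case_Z3 c; case_Z3 u. Qed.

Lemma wrap_link_progression (c a : 'Z_3) : c != 2 ->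
  wrap_link (a + c * step c) (a + c * step c + c) a (a + c).
Proof. by case_Z3 c; case_Z3 a. Qed.

Lemma nonincreasing_cycle_const (r : nat -> nat) (l : nat) :
  (forall k, (k < l)%N -> (r k.+1 <= r k)%N) -> (r 0 <= r l)%N ->
  forall k, (k <= l)%N -> r k = r 0.
Proof.
move=> decr wrap.
have mono j k : (k <= j <= l)%N -> (r j <= r k)%N.
  elim: j => [|j IH] /andP[kj jl]; first by have -> : k = 0%N by lia.
  have [->|kSj] := eqVneq k j.+1; first by [].
  apply: leq_trans (decr j _) (IH _); lia.
move=> k kl; apply/eqP; rewrite eqn_leq mono /=; last by rewrite kl.
by apply: leq_trans wrap (mono l k _); rewrite kl /=.
Qed.

Lemma arith_progression (V : zmodType) (u : nat -> V) (s : V) (l : nat) :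
  (forall k, (k < l)%N -> u k.+1 = u k + s) ->
  forall k, (k <= l)%N -> u k = u 0 + s *+ k.
Proof.
move=> incr; elim=> [|k IH] kl; first by rewrite addr0.
by rewrite incr // IH 1?ltnW // mulrSr addrA.
Qed.

Definition guess_strategy (n : nat) (z : 'I_n + 'I_n -> 'I_3) (v : 'I_n + 'I_n) : 'I_3 :=
  match v with
  | inl i => fguess (fun j => z (inr j)) i
  | inr j => gguess (fun i => z (inl i)) j
  end.

(* v_{i+1} looks at w_i and w_{i+1}, and w_{i+1} at v_{i+1} and v_{i+2}: all
   neighbours in the cycle. *)
Lemma guess_strategy_D_function (n : nat) : D_function (cycle_adj n) (guess_strategy n).
Proof.
move=> [i|j] z z' same /=.
- rewrite /fguess (same (inr i)); last by rewrite /= /cycle_vw_adj eqxx.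
  rewrite (same (inr (ord_pred i))) // /= /cycle_vw_adj.
  by have /= -> := congr1 val (ord_predK i); rewrite eqxx orbT.
- rewrite /gguess (same (inl j)); last by rewrite /= /cycle_vw_adj eqxx.
  by rewrite (same (inl (ordS j))) // /= /cycle_vw_adj eqxx orbT.
Qed.

Lemma solvable_of_no_bad (n : nat) :
  (forall x y : 'I_n -> 'Z_3, ~ bad_config x y) -> q_solvable (cycle_adj n) 3.
Proof.
move=> no_bad; exists (guess_strategy n); split; first exact: guess_strategy_D_function.
move=> z; case: (pickP (fun v => guess_strategy n z v == z v)) => [v /eqP | wrong].
  by exists v.
case: (no_bad (fun i => z (inl i)) (fun j => z (inr j))) => i.
by split; apply/negP => /eqP guessed; [move: (wrong (inl i)) | move: (wrong (inr i))];
  rewrite /= guessed eqxx.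
Qed.

Section Cycle.
Variable m : nat.
Local Notation n := m.+2.
Implicit Types x y : 'I_n -> 'Z_3.

Lemma ordS_inord k : (k < m.+1)%N -> ordS (inord k : 'I_n) = inord k.+1.
Proof. by move=> km; apply: val_inj; rewrite /= !inordK ?modn_small //; lia. Qed.

Lemma ord_pred_inord k : (k < m.+1)%N -> ord_pred (inord k.+1 : 'I_n) = inord k.
Proof. by move=> km; rewrite -ordS_inord // ordSK. Qed.

Lemma ordS_last : ordS (inord m.+1 : 'I_n) = inord 0.
Proof. by apply: val_inj; rewrite /= !inordK // modnn. Qed.

Lemma ord_pred_first : ord_pred (inord 0 : 'I_n) = inord m.+1.
Proof. by rewrite -ordS_last ordSK. Qed.

Lemma fguess_inner y k : (k < m.+1)%N ->
  fguess y (inord k.+1) = f_inner (y (inord k)) (y (inord k.+1)).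
Proof. by move=> km; rewrite /fguess /= ord_pred_inord // inordK. Qed.

Lemma fguess_first y : fguess y (inord 0) = f_wrap (y (inord m.+1)) (y (inord 0)).
Proof. by rewrite /fguess /= ord_pred_first inordK. Qed.

Lemma gguess_inner x k : (k < m.+1)%N ->
  gguess x (inord k) = g_inner (x (inord k)) (x (inord k.+1)).
Proof. by move=> km; rewrite /gguess /= ordS_inord // inordK ?(ltn_eqF km) //; lia. Qed.

Lemma gguess_last x : gguess x (inord m.+1) = g_wrap (x (inord m.+1)) (x (inord 0)).
Proof. by rewrite /gguess /= ordS_last inordK // eqxx. Qed.

Lemma bad_config_links x y :
  bad_config x y <->
  (forall k, (k < m.+1)%N ->
     inner_link (x (inord k)) (y (inord k)) (x (inord k.+1)) (y (inord k.+1)))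
  /\ wrap_link (x (inord m.+1)) (y (inord m.+1)) (x (inord 0)) (y (inord 0)).
Proof.
split=> [bad | [inner wrap] i].
- split=> [k km|].
  + have [_ g_wrong] := bad (inord k); have [f_wrong _] := bad (inord k.+1).
    by rewrite gguess_inner // in g_wrong; rewrite fguess_inner // in f_wrong; apply/andP.
  + have [_ g_wrong] := bad (inord m.+1); have [f_wrong _] := bad (inord 0).
    by rewrite gguess_last in g_wrong; rewrite fguess_first in f_wrong; apply/andP.
- rewrite -(inord_val i); have im := ltn_ord i; split.
  + case: (nat_of_ord i) im => [_|k km]; first by rewrite fguess_first; case/andP: wrap.
    by rewrite fguess_inner //; case/andP: (inner k km).
  + have [->|i_not_last] := eqVneq (nat_of_ord i) m.+1.
      by rewrite gguess_last; case/andP: wrap.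
    have km : (i < m.+1)%N by lia.
    by rewrite gguess_inner //; case/andP: (inner _ km).
Qed.

Lemma bad_config_progression x y : bad_config x y ->
  exists c, [/\ c != 2, n%:R = c + 1 &
    forall k, (k < n)%N -> y (inord k) = x (inord k) + c /\ x (inord k) = x (inord 0) + step c *+ k].
Proof.
move=> /bad_config_links [inner wrap].
pose X k := x (inord k); pose D k := y (inord k) - X k.
have D_const k : (k < n)%N -> D k = D 0.
  move=> kn; apply: drank_inj.
  apply: (@nonincreasing_cycle_const (drank \o D) m.+1) => [j jm||]; last by [].
    by case/andP: (inner_link_table (inner j jm)).
  by case/andP: (wrap_link_table wrap).
have X_prog : forall k, (k <= m.+1)%N -> X k = X 0 + step (D 0) *+ k.
  apply: arith_progression => k km.
  case/andP: (inner_link_table (inner k km)) => _ /implyP.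
  by rewrite -/(X k) -/(D k) -/(D k.+1) (D_const k.+1) // (D_const k (ltnW km)) => /(_ (eqxx _)) /eqP.
have closing : step (D 0) *+ m.+1 + wrap_step (D 0) = 0.
  case/andP: (wrap_link_table wrap) => _ /implyP.
  rewrite -/(X 0) -/(D 0) -/(D m.+1) D_const // => /(_ (eqxx _)) /eqP.
  by rewrite -/(X m.+1) (X_prog m.+1) // -addrA -{1}[X 0]addr0 => /addrI /esym.
have [c_not_2 nE] := closure_solution closing.
exists (D 0); split=> // k kn; split; last exact: X_prog.
by rewrite -(D_const k kn) /D addrC subrK.
Qed.

Lemma bad_configP x y :
  bad_config x y <->
  exists a c, [/\ c != 2, n%:R = c + 1 &
    forall i : 'I_n, y i = x i + c /\ x i = a + step c *+ val i].
Proof.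
split=> [/bad_config_progression [c [c_not_2 nE prog]] | [a [c [c_not_2 nE prog]]]].
  exists (x (inord 0)), c; split=> // i.
  by have := prog i (ltn_ord i); rewrite inord_val.
have m1E : (m.+1)%:R = c by apply: (addIr 1); rewrite natr1.
apply/bad_config_links; split=> [k km|].
  have [-> ->] := prog (inord k); have [-> ->] := prog (inord k.+1).
  have kn : (k < n)%N := ltnW km.
  rewrite /= !inordK // mulrSr addrA.
  exact: inner_link_progression.
have [-> ->] := prog (inord m.+1); have [-> ->] := prog (inord 0).
rewrite /= !inordK // mulr0n addr0 -mulr_natl m1E.
exact: wrap_link_progression.
Qed.
End Cycle.

(* n = 0 mod 3: no c fits; n = 1: c = 0, x = y = a - i; n = 2: c = 1,
   y = x + 1 = a + i (after shifting a). *)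
Theorem theorem16 (n : nat) (hn : (1 < n)%N) :
  ((n %% 3 = 0)%N ->
     (forall x y : 'I_n -> 'Z_3, ~ bad_config x y) /\ q_solvable (cycle_adj n) 3)
  /\
  ((n %% 3 = 1)%N ->
     forall x y : 'I_n -> 'Z_3,
       bad_config x y <->
       exists a : 'Z_3, forall i : 'I_n,
         x i = a - (val i)%:R /\ y i = a - (val i)%:R)
  /\
  ((n %% 3 = 2)%N ->
     forall x y : 'I_n -> 'Z_3,
       bad_config x y <->
       exists a : 'Z_3, forall i : 'I_n,
         y i = a + (val i)%:R /\ x i = a + (val i)%:R - 1).
Proof.
case: n hn => [|[|m]] // _.
have nE : (m.+2)%:R = ((m.+2 %% 3)%:R : 'Z_3) by rewrite Zp_nat_mod.
split; [|split] => [n0 | n1 x y | n2 x y].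
- suff no_bad : forall x y : 'I_m.+2 -> 'Z_3, ~ bad_config x y.
    by split=> //; apply: solvable_of_no_bad.
  move=> x y /bad_configP [a [c []]]; rewrite nE n0 => + /eqP; by case_Z3 c.
- rewrite bad_configP nE n1; split=> [[a [c [_ /eqP c0 prog]]] | [a prog]].
    have {}c0 : c = 0 by apply/eqP; move: c0; clear prog; case_Z3 c.
    exists a => i; have [-> ->] := prog i.
    by rewrite c0 addr0 /step eqxx mulNrn.
  exists a, 0; rewrite add0r; split=> // i; have [-> ->] := prog i.
  by rewrite addr0 /step eqxx mulNrn.
- rewrite bad_configP nE n2; split=> [[a [c [_ /eqP c1 prog]]] | [a prog]].
    have {}c1 : c = 1 by apply/eqP; move: c1; clear prog; case_Z3 c.
    exists (a + 1) => i; have [-> ->] := prog i.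
    by rewrite c1 /step /=; split; [exact: addrAC | rewrite addrAC addrK].
  exists (a - 1), 1; split=> // i; have [-> ->] := prog i.
  by rewrite /step /= subrK addrAC.
Qed.
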